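(* Let $\theta:\mathbb{A}\to\mathbb{A}^\lambda$ and $\zeta:\mathbb{B}\to\mathbb{B}^\lambda$ be primitive substitutions of the same length $\lambda$, each satisfying the standing assumptions, and let $\Sigma=\theta\vee\zeta:\mathcal{A}\to\mathcal{A}^\lambda$ be a substitution joining of them. Then $\operatorname{lcm}(h(\theta),h(\zeta))\mid h(\Sigma)$ and $$\max(c(\theta),c(\zeta))\le c(\Sigma)\le c(\theta)\cdot c(\zeta).$$
   Context: A substitution $\theta:\mathbb{A}\to\mathbb{A}^\lambda$ ($\lambda\ge2$) is primitive if some iterate $\theta^k(a)$ contains all letters for every $a$. Standing assumptions for a substitution: some letter $a_0$ with $\theta(a_0)_0=a_0$, injective on letters, infinite subshift. Height $h(\theta)=\max\{m\ge1:\gcd(m,\lambda)=1,\ m\mid\gcd\{r\ge1:u[r]=u[0]\}\}$ with $u$ the fixed point starting with $a_0$ (for $\Sigma$, use a fixed point of a suitable power); column number $c(\theta)=\min_{k\ge1,0\le j<\lambda^k}|\{\theta^k(a)_j:a\in\mathbb{A}\}|$. A substitution joining: $\mathcal{A}\subset\mathbb{A}\times\mathbb{B}$ with both coordinate projections surjective and such that $(a,b)\in\mathcal{A}$ implies $(\theta(a)_j,\zeta(b)_j)\in\mathcal{A}$ for all $0\le j<\lambda$; $\Sigma(a,b)_j=(\theta(a)_j,\zeta(b)_j)$, and $\Sigma$ is assumed primitive and to have a letter $e$ with $\Sigma(e)_0=e$. *)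

From HB Require Import structures.
From mathcomp Require Import all_boot all_order all_algebra.
Set Implicit Arguments. Unset Strict Implicit. Unset Printing Implicit Defensive.

(* subst_pow th k a j = th^k(a)_j, the j-th letter (0-based) of the word
   th^k(a) of length lam^k (meaningful for j < lam^k):
   th^(k+1)(a)_j = th( th^k(a)_(j / lam) )_(j mod lam). *)
Fixpoint subst_pow (T : Type) (lam : nat) (th : T -> lam.-tuple T)
    (k : nat) (a : T) (j : nat) : T :=
  match k with
  | 0 => a
  | k'.+1 => let b := subst_pow th k' a (j %/ lam) in nth b (th b) (j %% lam)
  end.

Definition primitive (T : finType) (lam : nat) (th : T -> lam.-tuple T) : Prop :=
  exists k, 0 < k /\ forall a b : T, exists2 j, j < lam ^ k & subst_pow th k a j = b.

Definition occurs (T : finType) (lam : nat) (th : T -> lam.-tuple T) (w : seq T) : Prop :=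
  exists k a i, i + size w <= lam ^ k /\
    forall t, t < size w -> subst_pow th k a (i + t) = nth a w t.

Definition in_subshift (T : finType) (lam : nat) (th : T -> lam.-tuple T)
    (x : int -> T) : Prop :=
  forall (m : int) (n : nat), occurs th [seq x (m + i%:Z)%R | i <- iota 0 n].

Definition infinite_subshift (T : finType) (lam : nat) (th : T -> lam.-tuple T) : Prop :=
  ~ (exists s : seq (int -> T), forall x, in_subshift th x ->
       exists2 i, i < size s & x =1 nth x s i).

(* the fixed point u starting with a0 (assuming th(a0)_0 = a0):
   u[r] = th^k(a0)_r for any k with r < lam^k; we take k = r+1. *)
Definition fixpt (T : Type) (lam : nat) (th : T -> lam.-tuple T) (a0 : T) (r : nat) : T :=
  subst_pow th r.+1 a0 r.

(* m divides gcd{ r >= 1 : u[r] = u[0] }  iff  m divides every such r *)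
Definition divides_returns (T : eqType) (lam : nat) (th : T -> lam.-tuple T)
    (a0 : T) (m : nat) : Prop :=
  forall r, 0 < r -> fixpt th a0 r = fixpt th a0 0 -> m %| r.

Definition height_of (T : eqType) (lam : nat) (th : T -> lam.-tuple T)
    (a0 : T) (h : nat) : Prop :=
  [/\ 0 < h, coprime h lam, divides_returns th a0 h &
      forall m, 0 < m -> coprime m lam -> divides_returns th a0 m -> m <= h].

Definition column (T : finType) (lam : nat) (th : T -> lam.-tuple T) (k j : nat) : {set T} :=
  [set subst_pow th k a j | a : T].

Definition colnum_of (T : finType) (lam : nat) (th : T -> lam.-tuple T) (c : nat) : Prop :=
  (exists k j, [/\ 0 < k, j < lam ^ k & #|column th k j| = c]) /\
  (forall k j, 0 < k -> j < lam ^ k -> c <= #|column th k j|).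

From HB Require Import structures.
From mathcomp Require Import all_boot all_order all_algebra.
Set Implicit Arguments. Unset Strict Implicit. Unset Printing Implicit Defensive.

(* Both coordinate projections of a joining intertwine Sigma with theta and
   zeta.  A return time of the fixed point of Sigma is therefore a return time
   of fixed points of theta and zeta, and by primitivity these are divisible
   by the heights of theta and zeta; maximality of the height of Sigma then
   gives the divisibility.  Columns of Sigma project onto columns of theta and
   zeta (lower bound) and embed into products of a theta-column and a
   zeta-column.  If theta^k1 has a minimal column at j1 and zeta^k2 at j2, the
   column of Sigma^(k1+k2) at lam^k1 j2 + j1 embeds into the product of these
   two minimal columns (upper bound). *)

Lemma ltn_exp_mulD (lam m n i j : nat) :
  j < lam ^ m -> i < lam ^ n -> lam ^ m * i + j < lam ^ (m + n).
Proof.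
move=> lt_j lt_i; rewrite expnD.
have lt_succ : lam ^ m * i + j < lam ^ m * i.+1 by rewrite mulnS addnC ltn_add2r.
by apply: (leq_trans lt_succ); apply: leq_mul.
Qed.

Lemma ltn_expS (lam n : nat) : 1 < lam -> n < lam ^ n.+1.
Proof.
move=> lam_gt1; apply: (leq_trans (ltn_expl n lam_gt1)).
by apply: leq_pexp2l => //; apply: ltnW.
Qed.

Section SubstitutionPowers.

Variables (T : Type) (lam : nat) (th : T -> lam.-tuple T).
Hypothesis lam_gt0 : 0 < lam.

Lemma subst_powD m n a i j : j < lam ^ m ->
  subst_pow th (m + n) a (lam ^ m * i + j) = subst_pow th m (subst_pow th n a i) j.
Proof.
elim: m j => [|m IHm] j lt_j.
  by rewrite expn0 in lt_j; case: j lt_j => // _; rewrite expn0 mul1n addn0.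
rewrite addSn /= expnSr -mulnA (mulnC lam) mulnA divnMDl // modnMDl IHm //.
by rewrite ltn_divLR // -expnSr.
Qed.

Lemma subst_pow_fixed0 n a : nth a (th a) 0 = a -> subst_pow th n a 0 = a.
Proof. by move=> tha; elim: n => //= n IHn; rewrite div0n mod0n IHn. Qed.

End SubstitutionPowers.

Section FixedPoint.

Variables (T : Type) (lam : nat) (th : T -> lam.-tuple T).
Hypothesis lam_gt1 : 1 < lam.

Let lam_gt0 : 0 < lam. Proof. exact: ltnW. Qed.

Lemma fixptE a k r : nth a (th a) 0 = a -> r < lam ^ k ->
  fixpt th a r = subst_pow th k a r.
Proof.
move=> tha lt_r.
have prefix N M p : p < lam ^ N -> subst_pow th (N + M) a p = subst_pow th N a p.
  move=> lt_p; have := subst_powD th lam_gt0 M a 0 lt_p.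
  by rewrite muln0 add0n subst_pow_fixed0.
by rewrite /fixpt -(prefix _ k _ (ltn_expS r lam_gt1)) addnC prefix.
Qed.

Lemma fixpt_mulD a m i j : nth a (th a) 0 = a -> j < lam ^ m ->
  fixpt th a (lam ^ m * i + j) = subst_pow th m (fixpt th a i) j.
Proof.
move=> tha lt_j.
rewrite (@fixptE _ (m + i.+1)) ?subst_powD //.
by apply: ltn_exp_mulD => //; apply: ltn_expS.
Qed.

End FixedPoint.

(* The height is defined through one fixed letter [a0]; primitivity transfers
   the divisibility to the fixed point of any other fixed letter [a]. *)
Lemma divides_returns_fixed (T : finType) lam (th : T -> lam.-tuple T) a0 a h r :
  1 < lam -> primitive th -> nth a0 (th a0) 0 = a0 -> nth a (th a) 0 = a ->
  coprime h lam -> divides_returns th a0 h -> fixpt th a r = fixpt th a 0 -> h %| r.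
Proof.
move=> lam_gt1 [k [k_gt0 prim]] tha0 tha co_h dvd_ret ret_r.
have lam_gt0 : 0 < lam by apply: ltnW.
have [q lt_q u_q] := prim a0 a; have [p lt_p u_p] := prim a a0.
have dvd_a0_return Q : fixpt th a0 Q = a0 -> h %| Q.
  case: Q => // Q u_Q; apply: dvd_ret => //.
  by rewrite u_Q /fixpt subst_pow_fixed0.
have a_at_q : fixpt th a0 q = a by rewrite (fixptE lam_gt1 tha0 lt_q).
have a_at_r : subst_pow th r.+1 a r = a.
  by move: ret_r; rewrite /fixpt => ->; rewrite subst_pow_fixed0.
(* [a] occurs at positions [lam^(r+1) q] and [lam^(r+1) q + r] of the fixed
   point of [a0], so [a0] occurs at two positions differing by [lam^k r]. *)
have a_at s : s < lam ^ r.+1 -> subst_pow th r.+1 a s = a ->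
    fixpt th a0 (lam ^ k * (lam ^ r.+1 * q + s) + p) = a0.
  by move=> lt_s u_s; rewrite !fixpt_mulD // a_at_q u_s.
have pos_lam_pow : 0 < lam ^ r.+1 by rewrite expn_gt0 lam_gt0.
have d0 := dvd_a0_return _ (a_at 0 pos_lam_pow (subst_pow_fixed0 _ tha)).
have := dvd_a0_return _ (a_at r (ltn_expS r lam_gt1) a_at_r).
have -> : lam ^ k * (lam ^ r.+1 * q + r) + p
    = lam ^ k * (lam ^ r.+1 * q + 0) + p + lam ^ k * r by rewrite addn0 mulnDr addnAC.
by rewrite (dvdn_addr _ d0) Gauss_dvdr // coprimeXr.
Qed.

Section SubstitutionMorphism.

Variables (U T : Type) (lam : nat) (si : U -> lam.-tuple U) (th : T -> lam.-tuple T).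
Variable phi : U -> T.
Hypothesis lam_gt0 : 0 < lam.
Hypothesis phi_morph : forall x (j : 'I_lam), phi (tnth (si x) j) = tnth (th (phi x)) j.

Lemma subst_pow_morph n x j : phi (subst_pow si n x j) = subst_pow th n (phi x) j.
Proof.
elim: n x j => [|n IHn] x j //=.
have tnthE (V : Type) (t : lam.-tuple V) d :
    nth d t (j %% lam) = tnth t (Ordinal (ltn_pmod j lam_gt0)).
  by rewrite (tnth_nth d).
by rewrite !tnthE phi_morph IHn.
Qed.

Lemma fixpt_morph x r : phi (fixpt si x r) = fixpt th (phi x) r.
Proof. exact: subst_pow_morph. Qed.

Lemma fixed0_morph x : nth x (si x) 0 = x -> nth (phi x) (th (phi x)) 0 = phi x.
Proof.
move=> six; have := subst_pow_morph 1 x 0.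
by rewrite /= ?div0n ?mod0n six.
Qed.

End SubstitutionMorphism.

Section Columns.

Variables (T : finType) (lam : nat) (th : T -> lam.-tuple T).
Hypothesis lam_gt0 : 0 < lam.

Lemma card_column_mulDl m n i j : j < lam ^ m ->
  #|column th (m + n) (lam ^ m * i + j)| <= #|column th m j|.
Proof.
move=> lt_j; apply: subset_leq_card; apply/subsetP => _ /imsetP [a _ ->].
by rewrite subst_powD //; apply: imset_f.
Qed.

Lemma card_column_mulDr m n i j : j < lam ^ m ->
  #|column th (m + n) (lam ^ m * i + j)| <= #|column th n i|.
Proof.
move=> lt_j; apply: (leq_trans _ (leq_imset_card (fun b => subst_pow th m b j) _)).
apply: subset_leq_card; apply/subsetP => _ /imsetP [a _ ->].
by rewrite subst_powD //; apply: imset_f; apply: imset_f.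
Qed.

End Columns.

Section ColumnsOfMorphisms.

Variables (U T : finType) (lam : nat) (si : U -> lam.-tuple U) (th : T -> lam.-tuple T).
Variable phi : U -> T.
Hypothesis lam_gt0 : 0 < lam.
Hypothesis phi_morph : forall x (j : 'I_lam), phi (tnth (si x) j) = tnth (th (phi x)) j.

Lemma card_column_morph k j : (forall a, exists x, phi x = a) ->
  #|column th k j| <= #|column si k j|.
Proof.
move=> phi_surj; apply: (leq_trans _ (leq_imset_card phi _)).
apply: subset_leq_card; apply/subsetP => _ /imsetP [a _ ->].
have [x <-] := phi_surj a; apply/imsetP; exists (subst_pow si k x j).
  exact: imset_f.
by rewrite (subst_pow_morph lam_gt0 phi_morph).
Qed.

Lemma colnum_morph_le c cs : (forall a, exists x, phi x = a) ->
  colnum_of th c -> colnum_of si cs -> c <= cs.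
Proof.
move=> phi_surj [_ min_c] [[k [j [k_gt0 lt_j <-]]] _].
exact: leq_trans (min_c k j k_gt0 lt_j) (card_column_morph k j phi_surj).
Qed.

Variables (V : finType) (ze : V -> lam.-tuple V) (psi : U -> V).
Hypothesis psi_morph : forall x (j : 'I_lam), psi (tnth (si x) j) = tnth (ze (psi x)) j.
Hypothesis pair_inj : injective (fun x => (phi x, psi x)).

Lemma card_column_pair k j :
  #|column si k j| <= #|column th k j| * #|column ze k j|.
Proof.
rewrite -cardsX -(card_imset _ pair_inj); apply: subset_leq_card.
apply/subsetP => _ /imsetP [_ /imsetP [x _ ->] ->].
rewrite inE /= (subst_pow_morph lam_gt0 phi_morph) (subst_pow_morph lam_gt0 psi_morph).
by rewrite !imset_f.
Qed.

Lemma colnum_pair_le c1 c2 c : colnum_of th c1 -> colnum_of ze c2 -> colnum_of si c ->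
  c <= c1 * c2.
Proof.
move=> [[k1 [j1 [k1_gt0 lt_j1 <-]]] _] [[k2 [j2 [_ lt_j2 <-]]] _] [_ min_c].
have lt_pos := ltn_exp_mulD lt_j1 lt_j2.
apply: (leq_trans (min_c _ _ _ lt_pos)); first by rewrite addn_gt0 k1_gt0.
apply: (leq_trans (card_column_pair _ _)).
by apply: leq_mul; [apply: card_column_mulDl | apply: card_column_mulDr].
Qed.

End ColumnsOfMorphisms.

Lemma coprime_lcm m n p : coprime m p -> coprime n p -> coprime (lcmn m n) p.
Proof.
move=> co_m co_n; apply: (coprime_dvdl (n := m * n)); last by rewrite coprimeMl co_m.
by rewrite dvdn_lcm dvdn_mulr // dvdn_mull.
Qed.

Lemma dvdn_height (T : eqType) lam (th : T -> lam.-tuple T) a0 h m :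
  height_of th a0 h -> 0 < m -> coprime m lam -> divides_returns th a0 m -> m %| h.
Proof.
move=> [h_gt0 co_h dvd_h max_h] m_gt0 co_m dvd_m.
have lcm_gt0 : 0 < lcmn m h by rewrite lcmn_gt0 m_gt0.
have le_lcm : lcmn m h <= h.
  apply: max_h => //; first exact: coprime_lcm.
  by move=> r r_gt0 ret_r; rewrite dvdn_lcm dvd_m ?dvd_h.
have -> : h = lcmn m h by apply/eqP; rewrite eqn_leq dvdn_leq ?dvdn_lcmr.
exact: dvdn_lcml.
Qed.

Lemma divides_returns_morph (U : eqType) (T : finType) lam (si : U -> lam.-tuple U)
    (th : T -> lam.-tuple T) (phi : U -> T) e a0 h :
  1 < lam -> (forall x (j : 'I_lam), phi (tnth (si x) j) = tnth (th (phi x)) j) ->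
  primitive th -> nth a0 (th a0) 0 = a0 -> nth e (si e) 0 = e ->
  coprime h lam -> divides_returns th a0 h -> divides_returns si e h.
Proof.
move=> lam_gt1 phi_morph prim tha0 sie co_h dvd_h r _ ret_r.
have lam_gt0 : 0 < lam by apply: ltnW.
apply: (divides_returns_fixed lam_gt1 prim tha0 (fixed0_morph lam_gt0 phi_morph sie)) => //.
by rewrite -!(fixpt_morph lam_gt0 phi_morph) ret_r.
Qed.

Theorem mainTheorem15 (lam : nat) (A B : finType)
  (th : A -> lam.-tuple A) (ze : B -> lam.-tuple B)
  (S : {set A * B})
  (Si : {x : A * B | x \in S} -> lam.-tuple {x : A * B | x \in S})
  (a0 : A) (b0 : B) (e : {x : A * B | x \in S}) :
  2 <= lam ->
  primitive th -> nth a0 (th a0) 0 = a0 -> injective th -> infinite_subshift th ->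
  primitive ze -> nth b0 (ze b0) 0 = b0 -> injective ze -> infinite_subshift ze ->
  (forall a : A, exists b : B, (a, b) \in S) ->
  (forall b : B, exists a : A, (a, b) \in S) ->
  (forall x, x \in S -> forall j : 'I_lam, (tnth (th x.1) j, tnth (ze x.2) j) \in S) ->
  (forall (x : {x : A * B | x \in S}) (j : 'I_lam),
      val (tnth (Si x) j) = (tnth (th (val x).1) j, tnth (ze (val x).2) j)) ->
  primitive Si -> nth e (Si e) 0 = e ->
  (forall hth hze hSi, height_of th a0 hth -> height_of ze b0 hze ->
      height_of Si e hSi -> lcmn hth hze %| hSi) /\
  (forall cth cze cSi, colnum_of th cth -> colnum_of ze cze -> colnum_of Si cSi ->
      maxn cth cze <= cSi <= cth * cze).
Proof.
move=> lam_gt1 prim_th th_a0 _ _ prim_ze ze_b0 _ _ surjA surjB _ SiE _ Si_e.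
have lam_gt0 : 0 < lam by apply: ltnW.
have fst_morph x (j : 'I_lam) : (val (tnth (Si x) j)).1 = tnth (th (val x).1) j.
  by rewrite SiE.
have snd_morph x (j : 'I_lam) : (val (tnth (Si x) j)).2 = tnth (ze (val x).2) j.
  by rewrite SiE.
split.
- move=> hth hze hSi [hth_gt0 co_th dvd_th _] [hze_gt0 co_ze dvd_ze _] height_Si.
  apply: dvdn_height height_Si _ _ _; first by rewrite lcmn_gt0 hth_gt0.
    exact: coprime_lcm.
  move=> r r_gt0 ret_r; rewrite dvdn_lcm.
  by rewrite (divides_returns_morph lam_gt1 fst_morph prim_th th_a0 Si_e co_th dvd_th)
    ?(divides_returns_morph lam_gt1 snd_morph prim_ze ze_b0 Si_e co_ze dvd_ze).
- move=> cth cze cSi col_th col_ze col_Si.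
  have fst_surj a : exists x : {x : A * B | x \in S}, (val x).1 = a.
    by have [b Sab] := surjA a; exists (exist _ (a, b) Sab).
  have snd_surj b : exists x : {x : A * B | x \in S}, (val x).2 = b.
    by have [a Sab] := surjB b; exists (exist _ (a, b) Sab).
  have pair_inj : injective (fun x : {x : A * B | x \in S} => ((val x).1, (val x).2)).
    move=> x y /= [eq1 eq2]; apply: val_inj.
    by rewrite [val x]surjective_pairing eq1 eq2 -surjective_pairing.
  rewrite geq_max (colnum_morph_le lam_gt0 fst_morph fst_surj col_th col_Si).
  rewrite (colnum_morph_le lam_gt0 snd_morph snd_surj col_ze col_Si) /=.
  exact: (colnum_pair_le lam_gt0 fst_morph snd_morph pair_inj).
Qed.
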